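(* Let $w$ be a nonnegative continuous weight function on $[-1,1]$, let $\{p_l\}_{l\ge 0}$ be the orthonormal polynomials for $\langle f,g\rangle_w=\int_{-1}^1 f(x)\overline{g(x)}w(x)\,dx$ (with $\deg p_l=l$ and positive leading coefficient), satisfying the three-term recurrence $b_{l+1}p_{l+1}(x)=(x-a_l)p_l(x)-b_lp_{l-1}(x)$, $l\ge 0$, $p_{-1}=0$, $p_0=1/b_0$, with $a_l\in\mathbb{R}$, $b_l>0$. Let $0\le m\le n$ be integers and let $\mathcal{R}(x)=p_m(x)+\sum_{l=0}^{m-1}e_lp_l(x)$ with $e_l\in\mathbb{C}$. Put $\gamma_{\mathcal{R}}:=\varepsilon(\mathcal{R})-a_m$ and $\delta_{\mathcal{R}}:=\|\mathcal{R}\|_w^2$. Let $\lambda_{n+1}$, $\lambda^m_{n-m+1}$ and $\lambda^{\mathcal{R}}_{n-m+1}$ denote the largest zero in $[-1,1]$ of $p_{n+1}(x)$, of $p_{n-m+1}(x,m)$ and of $p_{n-m+1}(x,m,\gamma_{\mathcal{R}},\delta_{\mathcal{R}})$, respectively. Then: (1) The maximizers of $\varepsilon$ over $\mathbb{S}_n$ are exactly the polynomials $\mathcal{P}_n(x)=\kappa_1\sum_{l=0}^n p_l(\lambda_{n+1})p_l(x)$, where $\kappa_1\in\mathbb{C}$ is such that $\|\mathcal{P}_n\|_w=1$ (so $\mathcal{P}_n$ is unique up to multiplication by a complex scalar of absolute value one), and $\max_{P\in\mathbb{S}_n}\varepsilon(P)=\lambda_{n+1}$. (2) The maximizers of $\varepsilon$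 over $\mathbb{S}_n^m$ are exactly the polynomials $\mathcal{P}_n^m(x)=\kappa_2\sum_{l=m}^n p_{l-m}(\lambda^m_{n-m+1},m)\,p_l(x)$, where $\kappa_2\in\mathbb{C}$ is such that $\|\mathcal{P}^m_n\|_w=1$ (unique up to a unimodular scalar), and $\max_{P\in\mathbb{S}^m_n}\varepsilon(P)=\lambda^m_{n-m+1}$. (3) The maximizers of $\varepsilon$ over $\mathbb{S}_n^{\mathcal{R}}$ are exactly the polynomials $\mathcal{P}_n^{\mathcal{R}}(x)=\kappa_3\big(\mathcal{R}(x)+\sum_{l=m+1}^n p_{l-m}(\lambda^{\mathcal{R}}_{n-m+1},m,\gamma_{\mathcal{R}},\delta_{\mathcal{R}})\,p_l(x)\big)$, where $\kappa_3\in\mathbb{C}$ is such that $\|\mathcal{P}^{\mathcal{R}}_n\|_w=1$ (unique up to a unimodular scalar), and $\max_{P\in\mathbb{S}^{\mathcal{R}}_n}\varepsilon(P)=\lambda^{\mathcal{R}}_{n-m+1}$.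
   Context: For $f\in L^2([-1,1],w)$, $\varepsilon(f):=\int_{-1}^1 x|f(x)|^2w(x)\,dx$ and $\|f\|_w^2=\langle f,f\rangle_w$. Polynomial spaces: $\Pi_n=\{\sum_{l=0}^n c_lp_l: c_l\in\mathbb{C}\}$, $\Pi_n^m=\{\sum_{l=m}^n c_lp_l: c_l\in\mathbb{C}\}$, $\Pi_n^{\mathcal{R}}=\{c_m\mathcal{R}+\sum_{l=m+1}^n c_lp_l: c_l\in\mathbb{C}\}$; their unit spheres are $\mathbb{S}_n,\mathbb{S}_n^m,\mathbb{S}_n^{\mathcal{R}}$ (elements with $\|P\|_w=1$). Associated polynomials $p_l(x,m)$: $p_{-1}(x,m)=0$, $p_0(x,m)=1$, $b_{m+l+1}p_{l+1}(x,m)=(x-a_{m+l})p_l(x,m)-b_{m+l}p_{l-1}(x,m)$ for $l\ge0$. Scaled co-recursive associated polynomials, for $\gamma\in\mathbb{R}$, $\delta\ge 0$: $p_0(x,m,\gamma,\delta)=1$, $p_1(x,m,\gamma,\delta)=(\delta x-a_m-\gamma)/b_{m+1}$, and $b_{m+l+1}p_{l+1}(x,m,\gamma,\delta)=(x-a_{m+l})p_l(x,m,\gamma,\delta)-b_{m+l}p_{l-1}(x,m,\gamma,\delta)$ for $l\ge1$. *)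

From Stdlib Require Import Reals.
From Coquelicot Require Import Coquelicot.
Open Scope R_scope.

Definition cabs2 (z : C) : R := Cmod z ^ 2.

Definition eps (w : R -> R) (f : R -> C) : R :=
  RInt (fun x => x * cabs2 (f x) * w x) (-1) 1.

Definition wnorm2 (w : R -> R) (f : R -> C) : R :=
  RInt (fun x => cabs2 (f x) * w x) (-1) 1.

Definition cont_on_11 (w : R -> R) : Prop :=
  forall x, -1 <= x <= 1 -> forall e, 0 < e -> exists d, 0 < d /\
    forall y, -1 <= y <= 1 -> Rabs (y - x) < d -> Rabs (w y - w x) < e.

(* Orthonormal polynomials via the three-term recurrence:
   p_{-1}=0, p_0=1/b_0, b_{l+1} p_{l+1} = (x-a_l) p_l - b_l p_{l-1}.
   opq_pair returns (p_l(x), p_{l-1}(x)). *)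
Fixpoint opq_pair (a b : nat -> R) (x : R) (l : nat) : R * R :=
  match l with
  | O => (1 / b O, 0)
  | S k => let (pk, pkm1) := opq_pair a b x k in
           (((x - a k) * pk - b k * pkm1) / b (S k), pk)
  end.
Definition opq (a b : nat -> R) (l : nat) (x : R) : R := fst (opq_pair a b x l).

Fixpoint assoc_pair (a b : nat -> R) (m : nat) (x : R) (l : nat) : R * R :=
  match l with
  | O => (1, 0)
  | S k => let (pk, pkm1) := assoc_pair a b m x k in
           (((x - a (m + k)%nat) * pk - b (m + k)%nat * pkm1) / b (m + k + 1)%nat, pk)
  end.
Definition assocp (a b : nat -> R) (l m : nat) (x : R) : R := fst (assoc_pair a b m x l).

Fixpoint corec_pair (a b : nat -> R) (m : nat) (g d x : R) (l : nat) : R * R :=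
  match l with
  | O => (1, 0)
  | S k =>
      match k with
      | O => ((d * x - a m - g) / b (m + 1)%nat, 1)
      | S _ => let (pk, pkm1) := corec_pair a b m g d x k in
               (((x - a (m + k)%nat) * pk - b (m + k)%nat * pkm1) / b (m + k + 1)%nat, pk)
      end
  end.
Definition corecp (a b : nat -> R) (l m : nat) (g d x : R) : R :=
  fst (corec_pair a b m g d x l).

Fixpoint csum_lt (f : nat -> C) (k : nat) : C :=
  match k with O => RtoC 0 | S j => Cplus (csum_lt f j) (f j) end.

Definition cterm (a b : nat -> R) (c : nat -> C) (l : nat) (x : R) : C :=
  Cmult (c l) (RtoC (opq a b l x)).

Definition inPi_m (a b : nat -> R) (m n : nat) (f : R -> C) : Prop :=
  exists c : nat -> C, forall x, f x = sum_n_m (fun l => cterm a b c l x) m n.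
Definition inPi (a b : nat -> R) (n : nat) (f : R -> C) : Prop := inPi_m a b 0 n f.

Definition inPi_R (a b : nat -> R) (Rp : R -> C) (m n : nat) (f : R -> C) : Prop :=
  exists c : nat -> C, forall x,
    f x = Cplus (Cmult (c m) (Rp x)) (sum_n_m (fun l => cterm a b c l x) (m + 1) n).

Definition unit_sphere (w : R -> R) (S : (R -> C) -> Prop) (f : R -> C) : Prop :=
  S f /\ wnorm2 w f = 1.

Definition is_maximizer (w : R -> R) (S : (R -> C) -> Prop) (f : R -> C) : Prop :=
  S f /\ forall g, S g -> eps w g <= eps w f.

Definition largest_zero_11 (q : R -> R) (lam : R) : Prop :=
  -1 <= lam <= 1 /\ q lam = 0 /\ forall y, -1 <= y <= 1 -> q y = 0 -> y <= lam.

Definition max_eps_is (w : R -> R) (S : (R -> C) -> Prop) (M : R) : Prop :=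
  (exists f, S f /\ eps w f = M) /\ forall f, S f -> eps w f <= M.

Definition Rpoly (a b : nat -> R) (m : nat) (e : nat -> C) (x : R) : C :=
  Cplus (RtoC (opq a b m x)) (csum_lt (fun l => cterm a b e l x) m).

From Stdlib Require Import Reals Lra Lia.
From Coquelicot Require Import Coquelicot.
Open Scope R_scope.

(* Write P in Pi_n^R as c_m R + sum_{j=1}^N c_{m+j} p_{m+j} (N = n - m).  By orthonormality and
   the three-term recurrence, ||P||_w^2 and eps(P) split over the real and imaginary parts u of the
   coordinates into the diagonal form d u_0^2 + sum u_j^2 (d = ||R||_w^2) and a tridiagonal Jacobi
   form with first diagonal entry eps(R).  The scaled co-recursive polynomials ph_j(t) solve the
   associated three-term recurrence, and summation by parts gives the Picone identity
     t ||u||^2 - E(u) = sum_j b ph_j ph_{j+1} (u_j/ph_j - u_{j+1}/ph_{j+1})^2 + b ph_{N+1}/ph_N u_N^2.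
   At the largest zero lam of ph_{N+1} all ph_j (j <= N) are positive, so eps(P) <= lam ||P||_w^2
   with equality exactly when u is proportional to (ph_j(lam)).  Parts (1) and (2) are the cases
   R = p_m (where ph_j are the associated polynomials) and then m = 0. *)

Fixpoint rsum (f : nat -> R) (k : nat) : R :=
  match k with O => 0 | S j => rsum f j + f j end.

Lemma rsum_ext f g k : (forall j, (j < k)%nat -> f j = g j) -> rsum f k = rsum g k.
Proof.
  induction k as [|k IH]; intros H; simpl; auto.
  rewrite IH by (intros; apply H; lia). rewrite H by lia. reflexivity.
Qed.

Lemma rsum_plus f g k : rsum (fun j => f j + g j) k = rsum f k + rsum g k.
Proof. induction k as [|k IH]; simpl; [ring | rewrite IH; ring]. Qed.

Lemma rsum_scal c f k : rsum (fun j => c * f j) k = c * rsum f k.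
Proof. induction k as [|k IH]; simpl; [ring | rewrite IH; ring]. Qed.

Lemma rsum_eq0 f k : (forall j, (j < k)%nat -> f j = 0) -> rsum f k = 0.
Proof.
  intros H. rewrite (rsum_ext f (fun _ => 0 * 0)) by (intros; rewrite H by lia; ring).
  rewrite rsum_scal. ring.
Qed.

Lemma rsum_ge0 f k : (forall j, (j < k)%nat -> 0 <= f j) -> 0 <= rsum f k.
Proof.
  induction k as [|k IH]; intros H; simpl; [lra |].
  assert (0 <= rsum f k) by (apply IH; intros; apply H; lia).
  assert (0 <= f k) by (apply H; lia). lra.
Qed.

Lemma rsum_term_le f k j : (forall i, (i < k)%nat -> 0 <= f i) -> (j < k)%nat -> f j <= rsum f k.
Proof.
  induction k as [|k IH]; intros H Hj; simpl; [lia |].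
  assert (0 <= rsum f k) by (apply rsum_ge0; intros; apply H; lia).
  destruct (Nat.eq_dec j k) as [->|Hjk]; [lra |].
  assert (f j <= rsum f k) by (apply IH; [intros; apply H |]; lia).
  assert (0 <= f k) by (apply H; lia). lra.
Qed.

Lemma rsum_eq0_terms f k : (forall i, (i < k)%nat -> 0 <= f i) -> rsum f k = 0 ->
  forall j, (j < k)%nat -> f j = 0.
Proof. intros H Hs j Hj. pose proof (rsum_term_le f k j H Hj). pose proof (H j Hj). lra. Qed.

Lemma opq_S a b x k : opq a b (S k) x =
  ((x - a k) * opq a b k x - b k * snd (opq_pair a b x k)) / b (S k).
Proof. unfold opq. simpl. destruct (opq_pair a b x k); reflexivity. Qed.

Lemma opq_pair_snd_S a b x k : snd (opq_pair a b x (S k)) = opq a b k x.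
Proof. unfold opq. simpl. destruct (opq_pair a b x k); reflexivity. Qed.

Lemma assocp_S a b m x k : assocp a b (S k) m x =
  ((x - a (m + k)%nat) * assocp a b k m x - b (m + k)%nat * snd (assoc_pair a b m x k))
    / b (m + k + 1)%nat.
Proof. unfold assocp. simpl. destruct (assoc_pair a b m x k); reflexivity. Qed.

Lemma assoc_pair_snd_S a b m x k : snd (assoc_pair a b m x (S k)) = assocp a b k m x.
Proof. unfold assocp. simpl. destruct (assoc_pair a b m x k); reflexivity. Qed.

Lemma corecp_0 a b m g d x : corecp a b 0 m g d x = 1.
Proof. reflexivity. Qed.

Lemma corecp_1 a b m g d x : corecp a b 1 m g d x = (d * x - a m - g) / b (m + 1)%nat.
Proof. reflexivity. Qed.

Lemma corecp_SS a b m g d x k : corecp a b (S (S k)) m g d x =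
  ((x - a (m + S k)%nat) * corecp a b (S k) m g d x - b (m + S k)%nat * corecp a b k m g d x)
    / b (m + S (S k))%nat.
Proof.
  replace (m + S (S k))%nat with (m + S k + 1)%nat by lia.
  assert (Hsnd : snd (corec_pair a b m g d x (S k)) = corecp a b k m g d x).
  { unfold corecp. destruct k as [|k]; [reflexivity |]. simpl.
    destruct k as [|k]; [reflexivity |]. destruct (corec_pair a b m g d x (S k)); reflexivity. }
  rewrite <- Hsnd. unfold corecp at 1 2. change (corec_pair a b m g d x (S (S k))) with
    (let (pk, pkm1) := corec_pair a b m g d x (S k) in
     (((x - a (m + S k)%nat) * pk - b (m + S k)%nat * pkm1) / b (m + S k + 1)%nat, pk)).
  destruct (corec_pair a b m g d x (S k)); reflexivity.
Qed.

Lemma corecp_0_1 a b m x k : corecp a b k m 0 1 x = assocp a b k m x.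
Proof.
  enough (H : corecp a b k m 0 1 x = assocp a b k m x /\
              corecp a b (S k) m 0 1 x = assocp a b (S k) m x) by apply H.
  induction k as [|k [IH1 IH2]].
  - split; [reflexivity |]. unfold corecp, assocp. simpl. rewrite !Nat.add_0_r. unfold Rdiv. ring.
  - split; [exact IH2 |]. rewrite corecp_SS, assocp_S, assoc_pair_snd_S, IH1, IH2.
    now replace (m + S k + 1)%nat with (m + S (S k))%nat by lia.
Qed.

Lemma opq_assocp_0 a b x k : opq a b k x = assocp a b k 0 x / b 0%nat.
Proof.
  enough (H : opq a b k x = assocp a b k 0 x / b 0%nat /\
              opq a b (S k) x = assocp a b (S k) 0 x / b 0%nat) by apply H.
  induction k as [|k [IH1 IH2]].
  - split; [reflexivity |]. unfold opq, assocp. simpl. unfold Rdiv. ring.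
  - split; [exact IH2 |]. rewrite opq_S, assocp_S, assoc_pair_snd_S, opq_pair_snd_S, IH1, IH2.
    replace (0 + S k + 1)%nat with (S (S k)) by lia. simpl (0 + S k)%nat. unfold Rdiv. ring.
Qed.

Definition cont (f : R -> R) : Prop := forall x, continuous f x.

Lemma cont_const c : cont (fun _ => c).
Proof. intros x; apply continuous_const. Qed.
Lemma cont_id : cont (fun x => x).
Proof. intros x; apply continuous_id. Qed.
Lemma cont_plus f g : cont f -> cont g -> cont (fun x => f x + g x).
Proof. intros Hf Hg x. apply (continuous_plus f g x); auto. Qed.
Lemma cont_mult f g : cont f -> cont g -> cont (fun x => f x * g x).
Proof. intros Hf Hg x. apply (continuous_mult f g x); auto. Qed.
Lemma cont_minus f g : cont f -> cont g -> cont (fun x => f x - g x).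
Proof. intros Hf Hg. apply cont_plus; auto. intros x. apply (continuous_opp g x); auto. Qed.
Lemma cont_scal c f : cont f -> cont (fun x => c * f x).
Proof. intros; apply cont_mult; auto using cont_const. Qed.
Lemma cont_ext f g : (forall x, f x = g x) -> cont f -> cont g.
Proof. intros E H x. apply (continuous_ext f g x E (H x)). Qed.
Lemma cont_div f c : cont f -> cont (fun x => f x / c).
Proof. intros H. apply (cont_ext (fun x => / c * f x)); [intros; unfold Rdiv; ring | now apply cont_scal]. Qed.
Lemma cont_rsum (F : nat -> R -> R) k : (forall j, cont (F j)) -> cont (fun x => rsum (fun j => F j x) k).
Proof. intros H. induction k; simpl; [apply cont_const | now apply cont_plus]. Qed.
Lemma cont_Rmin f g : cont f -> cont g -> cont (fun x => Rmin (f x) (g x)).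
Proof.
  intros Hf Hg. apply (cont_ext (fun x => (f x + g x - Rabs (f x - g x)) / 2)).
  - intros x. unfold Rmin. destruct Rle_dec.
    + rewrite Rabs_left1 by lra. field.
    + rewrite Rabs_right by lra. field.
  - apply cont_div, cont_minus; [now apply cont_plus |].
    intros x. apply continuous_Rabs_comp, cont_minus; auto.
Qed.
Lemma cont_continuity f : cont f -> continuity f.
Proof. intros H x. apply continuity_pt_filterlim, H. Qed.

Lemma cont_opq a b k : cont (opq a b k).
Proof.
  enough (H : cont (opq a b k) /\ cont (fun x => snd (opq_pair a b x k))) by apply H.
  induction k as [|k [IH1 IH2]]; split.
  - apply (cont_ext (fun _ => 1 / b 0%nat)); [reflexivity | apply cont_const].
  - apply (cont_ext (fun _ => 0)); [reflexivity | apply cont_const].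
  - apply (cont_ext (fun x => ((x - a k) * opq a b k x - b k * snd (opq_pair a b x k)) / b (S k))).
    + intros; now rewrite opq_S.
    + apply cont_div, cont_minus; [apply cont_mult; [apply cont_minus; [apply cont_id | apply cont_const] | auto] |].
      now apply cont_scal.
  - apply (cont_ext (opq a b k)); [intros; now rewrite opq_pair_snd_S | exact IH1].
Qed.

Lemma cont_corecp a b m g d k : cont (corecp a b k m g d).
Proof.
  enough (H : cont (corecp a b k m g d) /\ cont (corecp a b (S k) m g d)) by apply H.
  induction k as [|k [IH1 IH2]]; split; auto.
  - apply (cont_ext (fun _ => 1)); [reflexivity | apply cont_const].
  - apply (cont_ext (fun x => (d * x - a m - g) / b (m + 1)%nat)); [intros; now rewrite corecp_1 |].
    apply cont_div, cont_minus; [apply cont_minus; [apply cont_scal, cont_id | apply cont_const] | apply cont_const].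
  - apply (cont_ext (fun x => ((x - a (m + S k)%nat) * corecp a b (S k) m g d x
                               - b (m + S k)%nat * corecp a b k m g d x) / b (m + S (S k))%nat)).
    + intros; now rewrite corecp_SS.
    + apply cont_div, cont_minus; [apply cont_mult; [apply cont_minus; [apply cont_id | apply cont_const] | auto] |].
      now apply cont_scal.
Qed.

Section WeightedForms.
Variable w : R -> R.
Hypothesis Hw_nonneg : forall x, -1 <= x <= 1 -> 0 <= w x.
Hypothesis Hw_cont : cont_on_11 w.

Definition clamp11 x := Rmax (-1) (Rmin 1 x).

Lemma cont_w_clamp11 : cont (fun x => w (clamp11 x)).
Proof.
  assert (Hin : forall x, -1 <= clamp11 x <= 1) by (intros; unfold clamp11, Rmax, Rmin; repeat destruct Rle_dec; lra).
  assert (Hlip : forall x y, Rabs (clamp11 y - clamp11 x) <= Rabs (y - x)).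
  { intros x y. pose proof (Rle_abs (y - x)). pose proof (Rabs_maj2 (y - x)).
    apply Rabs_le. unfold clamp11, Rmax, Rmin. repeat destruct Rle_dec; lra. }
  intros x. apply continuity_pt_filterlim. intros eps Heps.
  destruct (Hw_cont (clamp11 x) (Hin x) eps Heps) as [del [Hdel H]].
  exists del. split; auto. intros y [_ Hy]. simpl in *. unfold R_dist in *.
  apply H; [apply Hin |]. pose proof (Hlip x y). lra.
Qed.

Lemma ex_RInt_weighted f : cont f -> ex_RInt (fun x => f x * w x) (-1) 1.
Proof.
  intros Hf. apply (ex_RInt_ext (fun x => f x * w (clamp11 x))).
  - intros x Hx. rewrite Rmin_left, Rmax_right in Hx by lra.
    replace (clamp11 x) with x; [reflexivity |].
    unfold clamp11, Rmax, Rmin. repeat destruct Rle_dec; lra.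
  - apply (ex_RInt_continuous (V := R_CompleteNormedModule)). intros z _.
    apply (cont_mult f _ Hf cont_w_clamp11).
Qed.

Lemma RInt_ext_11 (f g : R -> R) : (forall x, -1 < x < 1 -> f x = g x) -> RInt f (-1) 1 = RInt g (-1) 1.
Proof. intros H. apply RInt_ext. intros x Hx. rewrite Rmin_left, Rmax_right in Hx by lra. auto. Qed.

Lemma RInt_plus_R (f g : R -> R) u v : ex_RInt f u v -> ex_RInt g u v ->
  RInt (fun x => f x + g x) u v = RInt f u v + RInt g u v.
Proof. exact (RInt_plus f g u v). Qed.
Lemma RInt_scal_R (f : R -> R) u v c : ex_RInt f u v -> RInt (fun x => c * f x) u v = c * RInt f u v.
Proof. exact (RInt_scal f u v c). Qed.

Definition inner (f g : R -> R) : R := RInt (fun x => f x * g x * w x) (-1) 1.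
Definition xinner (f g : R -> R) : R := RInt (fun x => x * f x * g x * w x) (-1) 1.

Lemma ex_RInt_inner f g : cont f -> cont g -> ex_RInt (fun x => f x * g x * w x) (-1) 1.
Proof. intros. apply (ex_RInt_weighted (fun x => f x * g x)). now apply cont_mult. Qed.

Lemma xinner_inner f g : xinner f g = inner (fun x => x * f x) g.
Proof. apply RInt_ext_11; intros; ring. Qed.

Lemma inner_sym f g : inner f g = inner g f.
Proof. apply RInt_ext_11; intros; ring. Qed.
Lemma xinner_sym f g : xinner f g = xinner g f.
Proof. apply RInt_ext_11; intros; ring. Qed.

Lemma inner_ext f f' g g' : (forall x, f x = f' x) -> (forall x, g x = g' x) -> inner f g = inner f' g'.
Proof. intros E1 E2. apply RInt_ext_11. intros; now rewrite E1, E2. Qed.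
Lemma xinner_ext f f' g g' : (forall x, f x = f' x) -> (forall x, g x = g' x) -> xinner f g = xinner f' g'.
Proof. intros E1 E2. apply RInt_ext_11. intros; now rewrite E1, E2. Qed.

Lemma inner_plusl f1 f2 g : cont f1 -> cont f2 -> cont g ->
  inner (fun x => f1 x + f2 x) g = inner f1 g + inner f2 g.
Proof.
  intros. unfold inner. rewrite <- RInt_plus_R by (apply ex_RInt_inner; auto).
  apply RInt_ext_11; intros; ring.
Qed.
Lemma inner_scall c f g : cont f -> cont g -> inner (fun x => c * f x) g = c * inner f g.
Proof.
  intros. unfold inner. rewrite <- RInt_scal_R by (apply ex_RInt_inner; auto).
  apply RInt_ext_11; intros; ring.
Qed.
Lemma inner_0l g : inner (fun _ => 0) g = 0.
Proof.
  unfold inner. rewrite (RInt_ext_11 _ (fun x => 0 * 1)) by (intros; ring).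
  rewrite RInt_scal_R by apply ex_RInt_const. apply Rmult_0_l.
Qed.
Lemma inner_rsuml (F : nat -> R -> R) k g : (forall j, cont (F j)) -> cont g ->
  inner (fun x => rsum (fun j => F j x) k) g = rsum (fun j => inner (F j) g) k.
Proof.
  intros HF Hg. induction k; simpl; [apply inner_0l |].
  rewrite inner_plusl, IHk; auto. now apply cont_rsum.
Qed.

Lemma xinner_plusl f1 f2 g : cont f1 -> cont f2 -> cont g ->
  xinner (fun x => f1 x + f2 x) g = xinner f1 g + xinner f2 g.
Proof.
  intros. rewrite !xinner_inner, <- inner_plusl; try (apply cont_mult; auto using cont_id); auto.
  apply inner_ext; intros; ring.
Qed.
Lemma xinner_scall c f g : cont f -> cont g -> xinner (fun x => c * f x) g = c * xinner f g.
Proof.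
  intros. rewrite !xinner_inner, <- inner_scall; auto using cont_mult, cont_id.
  apply inner_ext; intros; ring.
Qed.
Lemma xinner_rsuml (F : nat -> R -> R) k g : (forall j, cont (F j)) -> cont g ->
  xinner (fun x => rsum (fun j => F j x) k) g = rsum (fun j => xinner (F j) g) k.
Proof.
  intros HF Hg. induction k; simpl.
  - rewrite xinner_inner, (inner_ext _ (fun _ => 0) g g), inner_0l; auto. intros; ring.
  - rewrite xinner_plusl, IHk; auto. now apply cont_rsum.
Qed.

Lemma inner_expand F G al be : cont F -> cont G ->
  inner (fun x => al * F x + be * G x) (fun x => al * F x + be * G x)
  = al ^ 2 * inner F F + 2 * al * be * inner F G + be ^ 2 * inner G G.
Proof.
  intros HF HG. assert (HaF : cont (fun x => al * F x)) by now apply cont_scal.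
  assert (HbG : cont (fun x => be * G x)) by now apply cont_scal.
  rewrite inner_plusl, !inner_scall, (inner_sym F), (inner_sym G), !inner_plusl, !inner_scall,
    (inner_sym G F); auto using cont_plus. ring.
Qed.
Lemma xinner_expand F G al be : cont F -> cont G ->
  xinner (fun x => al * F x + be * G x) (fun x => al * F x + be * G x)
  = al ^ 2 * xinner F F + 2 * al * be * xinner F G + be ^ 2 * xinner G G.
Proof.
  intros HF HG. assert (HaF : cont (fun x => al * F x)) by now apply cont_scal.
  assert (HbG : cont (fun x => be * G x)) by now apply cont_scal.
  rewrite xinner_plusl, !xinner_scall, (xinner_sym F), (xinner_sym G), !xinner_plusl, !xinner_scall,
    (xinner_sym G F); auto using cont_plus. ring.
Qed.

Lemma inner_ge0 f : cont f -> 0 <= inner f f.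
Proof.
  intros Hf. rewrite <- (inner_0l (fun _ => 0)).
  apply RInt_le; [lra | apply ex_RInt_inner; auto using cont_const | apply ex_RInt_inner; auto |].
  intros x Hx. assert (0 <= w x) by (apply Hw_nonneg; lra). assert (0 <= f x * f x) by nra. nra.
Qed.

Lemma xinner_le_inner f : cont f -> xinner f f <= inner f f.
Proof.
  intros Hf. apply RInt_le; [lra | | apply ex_RInt_inner; auto |].
  { apply (ex_RInt_inner (fun x => x * f x)); auto using cont_mult, cont_id. }
  intros x Hx. assert (0 <= w x) by (apply Hw_nonneg; lra).
  assert (0 <= (1 - x) * (f x * f x * w x)) by (apply Rmult_le_pos; nra). nra.
Qed.

End WeightedForms.

Section OrthonormalSystem.
Variable w : R -> R.
Variables a b : nat -> R.
Hypothesis Hw_cont : cont_on_11 w.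
Hypothesis Hb_pos : forall l, 0 < b l.
Hypothesis Horth : forall k l,
  RInt (fun x => opq a b k x * opq a b l x * w x) (-1) 1 = if Nat.eqb k l then 1 else 0.

Notation P := (opq a b).
Notation inner := (inner w).
Notation xinner := (xinner w).

Lemma cont_opq_pair_snd l : cont (fun x => snd (opq_pair a b x l)).
Proof.
  destruct l as [|l].
  - apply (cont_ext (fun _ => 0)); [reflexivity | apply cont_const].
  - apply (cont_ext (P l)); [intros; now rewrite opq_pair_snd_S | apply cont_opq].
Qed.

Lemma cont_scal_opq c l : cont (fun x => c * P l x).
Proof. apply cont_scal, cont_opq. Qed.

Lemma cont_rsum_opq h k : cont (fun x => rsum (fun l => h l * P l x) k).
Proof. apply (cont_rsum (fun l x => h l * P l x)). intros; apply cont_scal_opq. Qed.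

Local Hint Resolve cont_opq cont_opq_pair_snd cont_scal_opq cont_rsum_opq cont_scal cont_plus : cont_db.

Lemma inner_opq k l : inner (P k) (P l) = if Nat.eqb k l then 1 else 0.
Proof. apply Horth. Qed.

(* The matrix of multiplication by x in the basis (p_l) is the Jacobi matrix of (a_l, b_l). *)
Lemma xinner_opq l k : xinner (P l) (P k) =
  (if Nat.eqb l (S k) then b (S k) else 0) + (if Nat.eqb l k then a k else 0)
  + (if Nat.eqb k (S l) then b k else 0).
Proof.
  assert (Hx : forall x, x * P k x = b (S k) * P (S k) x + a k * P k x + b k * snd (opq_pair a b x k)).
  { intros x. rewrite opq_S. field. pose proof (Hb_pos (S k)); lra. }
  rewrite xinner_sym, xinner_inner, (inner_ext _ _ _ (P l) (P l) Hx (fun _ => eq_refl)).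
  rewrite !inner_plusl, !inner_scall, !inner_opq by auto with cont_db.
  rewrite (Nat.eqb_sym (S k) l), (Nat.eqb_sym k l).
  destruct k as [|k].
  - rewrite (inner_ext _ _ (fun _ => 0) _ (P l)), inner_0l by reflexivity. simpl.
    repeat match goal with |- context [if ?c then _ else _] => destruct c end; ring.
  - rewrite (inner_ext _ _ (P k) _ (P l)) by (intros; (reflexivity || apply opq_pair_snd_S)).
    rewrite inner_opq. cbn [Nat.eqb]. rewrite (Nat.eqb_sym k l).
    repeat match goal with |- context [if ?c then _ else _] => destruct c end; ring.
Qed.

Variable m : nat.

Definition head (hm : R) (h : nat -> R) x := hm * P m x + rsum (fun l => h l * P l x) m.
Definition tail (u : nat -> R) N x := rsum (fun j => u (S j) * P (m + S j)%nat x) N.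

Definition tail_norm2 (u : nat -> R) N := rsum (fun j => u (S j) ^ 2) N.
Definition tail_eps (u : nat -> R) N :=
  rsum (fun j => a (m + S j)%nat * u (S j) ^ 2) N + 2 * rsum (fun j => b (m + S j)%nat * u j * u (S j)) N.

Lemma cont_head hm h : cont (head hm h).
Proof. apply cont_plus; auto with cont_db. Qed.
Lemma cont_tail u N : cont (tail u N).
Proof. apply (cont_rsum (fun j x => u (S j) * P (m + S j)%nat x)). auto with cont_db. Qed.
Local Hint Resolve cont_head cont_tail : cont_db.

Lemma inner_head_opq hm h l : (m < l)%nat -> inner (head hm h) (P l) = 0.
Proof.
  intros Hl. unfold head. rewrite inner_plusl, inner_scall, inner_rsuml by auto with cont_db.
  rewrite inner_opq, (proj2 (Nat.eqb_neq m l)) by lia.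
  rewrite rsum_eq0; [ring |]. intros j Hj.
  rewrite inner_scall by auto with cont_db. rewrite inner_opq, (proj2 (Nat.eqb_neq j l)) by lia. ring.
Qed.

Lemma xinner_head_opq hm h l : (m < l)%nat ->
  xinner (head hm h) (P l) = if Nat.eqb l (S m) then hm * b (S m) else 0.
Proof.
  intros Hl. unfold head. rewrite xinner_plusl, xinner_scall, xinner_rsuml by auto with cont_db.
  rewrite xinner_opq, (proj2 (Nat.eqb_neq m (S l))), (proj2 (Nat.eqb_neq m l)) by lia.
  rewrite rsum_eq0.
  - destruct (Nat.eqb l (S m)) eqn:E; [apply Nat.eqb_eq in E; subst |]; ring.
  - intros j Hj. rewrite xinner_scall, xinner_opq by auto with cont_db.
    rewrite !(proj2 (Nat.eqb_neq _ _)) by lia. ring.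
Qed.

Lemma inner_tail_opq u N l : (m + N < l)%nat -> inner (tail u N) (P l) = 0.
Proof.
  intros Hl. unfold tail. rewrite inner_rsuml by auto with cont_db. apply rsum_eq0. intros j Hj.
  rewrite inner_scall by auto with cont_db. rewrite inner_opq, (proj2 (Nat.eqb_neq _ _)) by lia. ring.
Qed.

Lemma xinner_tail_opq u N : xinner (tail u N) (P (m + S N)%nat) =
  match N with O => 0 | S _ => u N * b (m + S N)%nat end.
Proof.
  unfold tail. rewrite xinner_rsuml by auto with cont_db. destruct N as [|N]; [reflexivity |].
  simpl rsum. rewrite rsum_eq0.
  - rewrite xinner_scall, xinner_opq by auto with cont_db.
    rewrite (proj2 (Nat.eqb_neq (m + S N) (S (m + S (S N))))), (proj2 (Nat.eqb_neq (m + S N) _)) by lia.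
    rewrite (proj2 (Nat.eqb_eq _ _)) by lia. ring.
  - intros j Hj. rewrite xinner_scall, xinner_opq by auto with cont_db.
    rewrite !(proj2 (Nat.eqb_neq _ _)) by lia. ring.
Qed.

(* Orthonormality splits off the tail; the only cross term is the Jacobi entry b_{m+1} between
   the head and p_{m+1}, which is why the head coefficient is tied to [u 0]. *)
Lemma inner_xinner_head_tail h u N :
  inner (fun x => head (u O) h x + tail u N x) (fun x => head (u O) h x + tail u N x)
    = inner (head (u O) h) (head (u O) h) + tail_norm2 u N /\
  xinner (fun x => head (u O) h x + tail u N x) (fun x => head (u O) h x + tail u N x)
    = xinner (head (u O) h) (head (u O) h) + tail_eps u N.
Proof.
  induction N as [|N [IH1 IH2]].
  - unfold tail_norm2, tail_eps, tail. simpl. split.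
    + rewrite (inner_ext _ _ (head (u O) h) _ (head (u O) h)) by (intros; ring). ring.
    + rewrite (xinner_ext _ _ (head (u O) h) _ (head (u O) h)) by (intros; ring). ring.
  - set (F := fun x => head (u O) h x + tail u N x) in *.
    assert (HF : cont F) by (apply cont_plus; auto with cont_db).
    assert (E : forall x, head (u O) h x + tail u (S N) x = 1 * F x + u (S N) * P (m + S N)%nat x).
    { intros; unfold F, tail; simpl; ring. }
    assert (HFP : inner F (P (m + S N)%nat) = 0).
    { unfold F. rewrite inner_plusl, inner_head_opq, inner_tail_opq by (auto with cont_db; lia). ring. }
    assert (HxFP : xinner F (P (m + S N)%nat) = b (m + S N)%nat * u N).
    { unfold F. rewrite xinner_plusl, xinner_head_opq, xinner_tail_opq by (auto with cont_db; lia).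
      destruct N as [|N].
      - rewrite (proj2 (Nat.eqb_eq _ _)) by lia. replace (m + 1)%nat with (S m) by lia. ring.
      - rewrite (proj2 (Nat.eqb_neq _ _)) by lia. ring. }
    split.
    + rewrite (inner_ext _ _ _ _ _ E E), inner_expand, IH1, HFP by auto with cont_db.
      rewrite inner_opq, Nat.eqb_refl. unfold tail_norm2. simpl. ring.
    + rewrite (xinner_ext _ _ _ _ _ E E), xinner_expand, IH2, HxFP, xinner_opq by auto with cont_db.
      rewrite Nat.eqb_refl, !(proj2 (Nat.eqb_neq _ _)) by lia. unfold tail_eps. simpl. ring.
Qed.

End OrthonormalSystem.

#[export] Hint Resolve cont_opq cont_opq_pair_snd cont_scal_opq cont_rsum_opq cont_scal cont_plus
  cont_head cont_tail : cont_db.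

Lemma cabs2_re_im z : cabs2 z = fst z ^ 2 + snd z ^ 2.
Proof. unfold cabs2, Cmod. rewrite pow2_sqrt; [reflexivity | nra]. Qed.

Lemma C_eq (z1 z2 : C) : fst z1 = fst z2 -> snd z1 = snd z2 -> z1 = z2.
Proof. destruct z1, z2; simpl; intros; subst; auto. Qed.

Lemma csum_lt_fst f k : fst (csum_lt f k) = rsum (fun l => fst (f l)) k.
Proof. induction k; simpl; auto. now rewrite <- IHk. Qed.
Lemma csum_lt_snd f k : snd (csum_lt f k) = rsum (fun l => snd (f l)) k.
Proof. induction k; simpl; auto. now rewrite <- IHk. Qed.

Lemma sum_n_m_shift_fst (f : nat -> C) m N :
  fst (sum_n_m f (m + 1) (m + N)) = rsum (fun j => fst (f (m + S j)%nat)) N.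
Proof.
  induction N as [|N IH]; [now rewrite sum_n_m_zero by lia |].
  replace (m + S N)%nat with (S (m + N)) by lia. rewrite sum_n_Sm by lia. simpl. rewrite IH.
  now replace (S (m + N)) with (m + S N)%nat by lia.
Qed.
Lemma sum_n_m_shift_snd (f : nat -> C) m N :
  snd (sum_n_m f (m + 1) (m + N)) = rsum (fun j => snd (f (m + S j)%nat)) N.
Proof.
  induction N as [|N IH]; [now rewrite sum_n_m_zero by lia |].
  replace (m + S N)%nat with (S (m + N)) by lia. rewrite sum_n_Sm by lia. simpl. rewrite IH.
  now replace (S (m + N)) with (m + S N)%nat by lia.
Qed.

Lemma Cmult_sum_n_m k (f : nat -> C) p q :
  Cmult k (sum_n_m f p q) = sum_n_m (fun l => Cmult k (f l)) p q.
Proof.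
  destruct (Compare_dec.le_lt_dec p q) as [Hpq | Hpq].
  - induction Hpq as [|q Hpq IH].
    + now rewrite !sum_n_n.
    + rewrite !sum_n_Sm, <- IH by lia. apply C_eq; simpl; ring.
  - rewrite !sum_n_m_zero by lia. apply C_eq; simpl; ring.
Qed.

Section ComplexForms.
Variable w : R -> R.
Hypothesis Hw_cont : cont_on_11 w.

Lemma wnorm2_re_im f : cont (fun x => fst (f x)) -> cont (fun x => snd (f x)) ->
  wnorm2 w f = inner w (fun x => fst (f x)) (fun x => fst (f x)) + inner w (fun x => snd (f x)) (fun x => snd (f x)).
Proof.
  intros H1 H2. unfold wnorm2, inner. rewrite <- RInt_plus_R by (apply ex_RInt_inner; auto).
  apply RInt_ext_11. intros. rewrite cabs2_re_im. ring.
Qed.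

Lemma eps_re_im f : cont (fun x => fst (f x)) -> cont (fun x => snd (f x)) ->
  eps w f = xinner w (fun x => fst (f x)) (fun x => fst (f x)) + xinner w (fun x => snd (f x)) (fun x => snd (f x)).
Proof.
  intros H1 H2. unfold eps, xinner.
  rewrite <- RInt_plus_R by (apply (ex_RInt_inner w Hw_cont (fun x => x * _ (f x))); auto using cont_mult, cont_id).
  apply RInt_ext_11. intros. rewrite cabs2_re_im. ring.
Qed.

End ComplexForms.

Section PiRCoordinates.
Variable w : R -> R.
Variables a b : nat -> R.
Hypothesis Hw_nonneg : forall x, -1 <= x <= 1 -> 0 <= w x.
Hypothesis Hw_cont : cont_on_11 w.
Hypothesis Hb_pos : forall l, 0 < b l.
Hypothesis Horth : forall k l,
  RInt (fun x => opq a b k x * opq a b l x * w x) (-1) 1 = if Nat.eqb k l then 1 else 0.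
Variable m : nat.
Variable e : nat -> C.

Notation P := (opq a b).
Notation inner := (inner w).
Notation xinner := (xinner w).
Notation Rp := (Rpoly a b m e).

Definition Rre x := P m x + rsum (fun l => fst (e l) * P l x) m.
Definition Rim x := rsum (fun l => snd (e l) * P l x) m.
Lemma cont_Rre : cont Rre. Proof. unfold Rre. auto with cont_db. Qed.
Lemma cont_Rim : cont Rim. Proof. unfold Rim. auto with cont_db. Qed.
Local Hint Resolve cont_Rre cont_Rim : cont_db.

Lemma Rpoly_fst x : fst (Rp x) = Rre x.
Proof. unfold Rpoly, Rre. simpl. rewrite csum_lt_fst. f_equal. apply rsum_ext. intros; unfold cterm; simpl; ring. Qed.
Lemma Rpoly_snd x : snd (Rp x) = Rim x.
Proof. unfold Rpoly, Rim. simpl. rewrite csum_lt_snd, Rplus_0_l. apply rsum_ext. intros; unfold cterm; simpl; ring. Qed.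

Lemma cont_Rpoly_fst : cont (fun x => fst (Rp x)).
Proof. apply (cont_ext Rre); [intros; now rewrite Rpoly_fst | exact cont_Rre]. Qed.
Lemma cont_Rpoly_snd : cont (fun x => snd (Rp x)).
Proof. apply (cont_ext Rim); [intros; now rewrite Rpoly_snd | exact cont_Rim]. Qed.

Lemma wnorm2_Rpoly : wnorm2 w Rp = inner Rre Rre + inner Rim Rim.
Proof.
  rewrite (wnorm2_re_im w Hw_cont) by (apply cont_Rpoly_fst || apply cont_Rpoly_snd).
  f_equal; apply inner_ext; intros; auto using Rpoly_fst, Rpoly_snd.
Qed.
Lemma eps_Rpoly : eps w Rp = xinner Rre Rre + xinner Rim Rim.
Proof.
  rewrite (eps_re_im w Hw_cont) by (apply cont_Rpoly_fst || apply cont_Rpoly_snd).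
  f_equal; apply xinner_ext; intros; auto using Rpoly_fst, Rpoly_snd.
Qed.

Lemma wnorm2_Rpoly_ge1 : 1 <= wnorm2 w Rp.
Proof.
  rewrite wnorm2_Rpoly. set (Q x := rsum (fun l => fst (e l) * P l x) m).
  assert (HQ : cont Q) by (unfold Q; auto with cont_db).
  assert (HPQ : inner (P m) Q = 0).
  { rewrite inner_sym. unfold Q. rewrite inner_rsuml by auto with cont_db. apply rsum_eq0. intros j Hj.
    rewrite inner_scall, (inner_opq w a b Horth), (proj2 (Nat.eqb_neq _ _)) by (auto with cont_db; lia). ring. }
  rewrite (inner_ext _ Rre (fun x => 1 * P m x + 1 * Q x) _ (fun x => 1 * P m x + 1 * Q x))
    by (intros; unfold Rre, Q; ring).
  rewrite inner_expand, (inner_opq w a b Horth), Nat.eqb_refl, HPQ by auto with cont_db.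
  pose proof (inner_ge0 w Hw_nonneg Hw_cont Q HQ). pose proof (inner_ge0 w Hw_nonneg Hw_cont Rim cont_Rim). nra.
Qed.

Variable c : nat -> C.
Variable N : nat.
Variable Pf : R -> C.
Hypothesis HPf : forall x,
  Pf x = Cplus (Cmult (c m) (Rp x)) (sum_n_m (fun l => cterm a b c l x) (m + 1) (m + N)).

(* Real and imaginary parts of the coordinates c_{m+j}; [coef_re 0] multiplies R. *)
Definition coef_re j := fst (c (m + j)%nat).
Definition coef_im j := snd (c (m + j)%nat).

Let head_re l := coef_re 0 * fst (e l) - coef_im 0 * snd (e l).
Let head_im l := coef_re 0 * snd (e l) + coef_im 0 * fst (e l).

Lemma head_re_Rpoly x : head a b m (coef_re 0) head_re x = coef_re 0 * Rre x + - coef_im 0 * Rim x.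
Proof.
  unfold head, head_re, Rre, Rim.
  rewrite (rsum_ext _ (fun l => coef_re 0 * (fst (e l) * P l x) + - coef_im 0 * (snd (e l) * P l x)))
    by (intros; ring).
  rewrite rsum_plus, !rsum_scal. ring.
Qed.
Lemma head_im_Rpoly x : head a b m (coef_im 0) head_im x = coef_im 0 * Rre x + coef_re 0 * Rim x.
Proof.
  unfold head, head_im, Rre, Rim.
  rewrite (rsum_ext _ (fun l => coef_re 0 * (snd (e l) * P l x) + coef_im 0 * (fst (e l) * P l x)))
    by (intros; ring).
  rewrite rsum_plus, !rsum_scal. ring.
Qed.

Lemma PiR_fst x : fst (Pf x) = head a b m (coef_re 0) head_re x + tail a b m coef_re N x.
Proof.
  rewrite head_re_Rpoly, HPf.
  change (fst (c m) * fst (Rp x) - snd (c m) * snd (Rp x)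
          + fst (sum_n_m (fun l => cterm a b c l x) (m + 1) (m + N))
          = coef_re 0 * Rre x + - coef_im 0 * Rim x + tail a b m coef_re N x).
  rewrite sum_n_m_shift_fst, Rpoly_fst, Rpoly_snd.
  unfold coef_re, coef_im, tail. rewrite !Nat.add_0_r. f_equal; [ring |].
  apply rsum_ext. intros; unfold cterm; simpl; ring.
Qed.
Lemma PiR_snd x : snd (Pf x) = head a b m (coef_im 0) head_im x + tail a b m coef_im N x.
Proof.
  rewrite head_im_Rpoly, HPf.
  change (fst (c m) * snd (Rp x) + snd (c m) * fst (Rp x)
          + snd (sum_n_m (fun l => cterm a b c l x) (m + 1) (m + N))
          = coef_im 0 * Rre x + coef_re 0 * Rim x + tail a b m coef_im N x).
  rewrite sum_n_m_shift_snd, Rpoly_fst, Rpoly_snd.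
  unfold coef_re, coef_im, tail. rewrite !Nat.add_0_r. f_equal; [ring |].
  apply rsum_ext. intros; unfold cterm; simpl; ring.
Qed.

Lemma cont_PiR_fst : cont (fun x => fst (Pf x)).
Proof.
  apply (cont_ext (fun x => head a b m (coef_re 0) head_re x + tail a b m coef_re N x));
    [intros; now rewrite PiR_fst | auto with cont_db].
Qed.
Lemma cont_PiR_snd : cont (fun x => snd (Pf x)).
Proof.
  apply (cont_ext (fun x => head a b m (coef_im 0) head_im x + tail a b m coef_im N x));
    [intros; now rewrite PiR_snd | auto with cont_db].
Qed.

Lemma wnorm2_PiR : wnorm2 w Pf =
  wnorm2 w Rp * (coef_re 0 ^ 2 + coef_im 0 ^ 2) + tail_norm2 coef_re N + tail_norm2 coef_im N.
Proof.
  rewrite (wnorm2_re_im w Hw_cont) by (apply cont_PiR_fst || apply cont_PiR_snd).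
  rewrite (inner_ext _ _ _ _ _ PiR_fst PiR_fst), (inner_ext _ _ _ _ _ PiR_snd PiR_snd).
  rewrite (proj1 (inner_xinner_head_tail w a b Hw_cont Hb_pos Horth m head_re coef_re N)).
  rewrite (proj1 (inner_xinner_head_tail w a b Hw_cont Hb_pos Horth m head_im coef_im N)).
  rewrite (inner_ext _ _ _ _ _ head_re_Rpoly head_re_Rpoly), (inner_ext _ _ _ _ _ head_im_Rpoly head_im_Rpoly).
  rewrite !inner_expand, wnorm2_Rpoly by auto with cont_db. ring.
Qed.

Lemma eps_PiR : eps w Pf =
  eps w Rp * (coef_re 0 ^ 2 + coef_im 0 ^ 2) + tail_eps a b m coef_re N + tail_eps a b m coef_im N.
Proof.
  rewrite (eps_re_im w Hw_cont) by (apply cont_PiR_fst || apply cont_PiR_snd).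
  rewrite (xinner_ext _ _ _ _ _ PiR_fst PiR_fst), (xinner_ext _ _ _ _ _ PiR_snd PiR_snd).
  rewrite (proj2 (inner_xinner_head_tail w a b Hw_cont Hb_pos Horth m head_re coef_re N)).
  rewrite (proj2 (inner_xinner_head_tail w a b Hw_cont Hb_pos Horth m head_im coef_im N)).
  rewrite (xinner_ext _ _ _ _ _ head_re_Rpoly head_re_Rpoly), (xinner_ext _ _ _ _ _ head_im_Rpoly head_im_Rpoly).
  rewrite !xinner_expand, eps_Rpoly by auto with cont_db. ring.
Qed.

Lemma eps_le_wnorm2_PiR : eps w Pf <= wnorm2 w Pf.
Proof.
  rewrite (eps_re_im w Hw_cont), (wnorm2_re_im w Hw_cont) by (apply cont_PiR_fst || apply cont_PiR_snd).
  pose proof (xinner_le_inner w Hw_nonneg Hw_cont _ cont_PiR_fst).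
  pose proof (xinner_le_inner w Hw_nonneg Hw_cont _ cont_PiR_snd). lra.
Qed.

End PiRCoordinates.

(* ||.||_w^2 and eps on Pi_{m+N}^R, in the coordinates u_j of R (j = 0) and of p_{m+j} (j > 0),
   when d = ||R||_w^2 and a_m + g = eps(R). *)
Definition coef_norm2 (d : R) (u : nat -> R) N := d * u O ^ 2 + tail_norm2 u N.
Definition coef_eps (a b : nat -> R) m (g : R) (u : nat -> R) N := (a m + g) * u O ^ 2 + tail_eps a b m u N.

Lemma coef_norm2_ext d u u' N : (forall j, (j <= N)%nat -> u j = u' j) -> coef_norm2 d u N = coef_norm2 d u' N.
Proof.
  intros H. unfold coef_norm2, tail_norm2. rewrite H by lia. f_equal.
  apply rsum_ext. intros; now rewrite H by lia.
Qed.
Lemma coef_eps_ext a b m g u u' N : (forall j, (j <= N)%nat -> u j = u' j) ->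
  coef_eps a b m g u N = coef_eps a b m g u' N.
Proof.
  intros H. unfold coef_eps, tail_eps. rewrite H by lia. do 2 f_equal; [| f_equal];
    apply rsum_ext; intros; now rewrite !H by lia.
Qed.
Lemma coef_norm2_scal d s u N : coef_norm2 d (fun j => s * u j) N = s ^ 2 * coef_norm2 d u N.
Proof.
  unfold coef_norm2, tail_norm2. rewrite (rsum_ext _ (fun j => s ^ 2 * u (S j) ^ 2)) by (intros; ring).
  rewrite rsum_scal. ring.
Qed.
Lemma coef_norm2_pos d u N : 0 < d -> u O <> 0 -> 0 < coef_norm2 d u N.
Proof.
  intros Hd Hu. unfold coef_norm2, tail_norm2.
  assert (0 <= rsum (fun j => u (S j) ^ 2) N) by (apply rsum_ge0; intros; apply pow2_ge_0).
  assert (0 < u O ^ 2) by (apply pow2_gt_0; exact Hu). nra.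
Qed.

Section CorecursiveForms.
Variables a b : nat -> R.
Hypothesis Hb_pos : forall l, 0 < b l.
Variable m : nat.
Variables g d t : R.
Notation ph j := (corecp a b j m g d t).

Lemma b_neq0 k : b k <> 0.
Proof. pose proof (Hb_pos k); lra. Qed.

(* The scaled co-recursive polynomials at t are the formal eigenvector of the truncated Jacobi
   pencil: the defect only lives in the last coordinate. *)
Lemma coef_forms_corecp N :
  t * coef_norm2 d (fun j => ph j) N - coef_eps a b m g (fun j => ph j) N = b (m + S N)%nat * ph (S N) * ph N.
Proof.
  unfold coef_norm2, coef_eps, tail_norm2, tail_eps.
  induction N as [|N IH]; cbn [rsum].
  - rewrite corecp_0, corecp_1. replace (m + 1)%nat with (m + S 0)%nat by lia. field. apply b_neq0.
  - rewrite corecp_SS. match type of IH with ?L = _ =>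
      transitivity (L + (t * ph (S N) ^ 2 - a (m + S N)%nat * ph (S N) ^ 2
                         - 2 * (b (m + S N)%nat * ph N * ph (S N)))) end; [ring |].
    rewrite IH. field. apply b_neq0.
Qed.

Definition cd_term (u : nat -> R) j :=
  b (m + S j)%nat * ph j * ph (S j) * (u j / ph j - u (S j) / ph (S j)) ^ 2.

Lemma coef_forms_gap N u : (forall j, (j <= N)%nat -> ph j <> 0) ->
  t * coef_norm2 d u N - coef_eps a b m g u N
  = rsum (cd_term u) N + b (m + S N)%nat * ph (S N) / ph N * u N ^ 2.
Proof.
  unfold coef_norm2, coef_eps, tail_norm2, tail_eps.
  induction N as [|N IH]; intros Hnz; cbn [rsum].
  - rewrite corecp_0, corecp_1. replace (m + 1)%nat with (m + S 0)%nat by lia. field. apply b_neq0.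
  - specialize (IH (fun j Hj => Hnz j ltac:(lia))).
    match type of IH with ?L = _ =>
      transitivity (L + (t * u (S N) ^ 2 - a (m + S N)%nat * u (S N) ^ 2
                         - 2 * (b (m + S N)%nat * u N * u (S N)))) end; [ring |].
    rewrite IH. unfold cd_term. rewrite corecp_SS. field.
    split; [apply b_neq0 | split; apply Hnz; lia].
Qed.

Section AtZero.
Variable N : nat.
Hypothesis Hpos : forall j, (j <= N)%nat -> 0 < ph j.
Hypothesis Hzero : ph (S N) = 0.

Lemma cd_term_ge0 u j : (j < N)%nat -> 0 <= cd_term u j.
Proof.
  intros Hj. unfold cd_term. pose proof (Hb_pos (m + S j)%nat).
  pose proof (Hpos j ltac:(lia)). pose proof (Hpos (S j) ltac:(lia)).
  apply Rmult_le_pos; [repeat apply Rmult_le_pos; lra | apply pow2_ge_0].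
Qed.

Lemma coef_forms_gap_zero u : t * coef_norm2 d u N - coef_eps a b m g u N = rsum (cd_term u) N.
Proof.
  rewrite coef_forms_gap, Hzero; [unfold Rdiv; ring |].
  intros j Hj. pose proof (Hpos j Hj). lra.
Qed.

Lemma coef_eps_le u : coef_eps a b m g u N <= t * coef_norm2 d u N.
Proof.
  pose proof (coef_forms_gap_zero u).
  assert (0 <= rsum (cd_term u) N) by (apply rsum_ge0; intros; now apply cd_term_ge0). lra.
Qed.

Lemma coef_eps_eq_prop u : coef_eps a b m g u N = t * coef_norm2 d u N ->
  forall j, (j <= N)%nat -> u j = u O * ph j.
Proof.
  intros E. assert (Hs : rsum (cd_term u) N = 0) by (pose proof (coef_forms_gap_zero u); lra).
  assert (Hstep : forall j, (j < N)%nat -> u (S j) / ph (S j) = u j / ph j).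
  { intros j Hj. pose proof (rsum_eq0_terms _ _ (fun i Hi => cd_term_ge0 u i Hi) Hs j Hj) as Z.
    unfold cd_term in Z. pose proof (Hb_pos (m + S j)%nat).
    pose proof (Hpos j ltac:(lia)). pose proof (Hpos (S j) ltac:(lia)).
    assert (0 < b (m + S j)%nat * ph j * ph (S j)) by (repeat apply Rmult_lt_0_compat; lra).
    apply Rmult_integral in Z as [Z | Z]; [lra |]. assert (Z3 : u j / ph j - u (S j) / ph (S j) = 0) by nra. lra. }
  assert (Hconst : forall j, (j <= N)%nat -> u j / ph j = u O).
  { induction j; intros Hj; [rewrite corecp_0; field | rewrite Hstep by lia; apply IHj; lia]. }
  intros j Hj. pose proof (Hpos j Hj). rewrite <- (Hconst j Hj). field. lra.
Qed.

Lemma coef_eps_eq_of_prop u s : (forall j, (j <= N)%nat -> u j = s * ph j) ->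
  coef_eps a b m g u N = t * coef_norm2 d u N.
Proof.
  intros Hu. pose proof (coef_forms_gap_zero u) as H. rewrite rsum_eq0 in H; [lra |].
  intros j Hj. unfold cd_term. rewrite !Hu by lia.
  pose proof (Hpos j ltac:(lia)). pose proof (Hpos (S j) ltac:(lia)).
  replace (s * ph j / ph j - s * ph (S j) / ph (S j)) with 0 by (field; lra). ring.
Qed.

End AtZero.
End CorecursiveForms.

Section CorecursivePositivity.
Variables a b : nat -> R.
Hypothesis Hb_pos : forall l, 0 < b l.
Variable m : nat.
Variables g d : R.
Hypothesis Hd : 0 < d.
Notation ph j t := (corecp a b j m g d t).
Variable N : nat.

Lemma corecp_no_common_zero k s : ph k s = 0 -> ph (S k) s = 0 -> False.
Proof.
  revert s. induction k as [|k IH]; intros s H1 H2; [rewrite corecp_0 in H1; lra |].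
  apply (IH s); auto. rewrite corecp_SS, H1 in H2.
  pose proof (b_neq0 b Hb_pos (m + S (S k))). pose proof (b_neq0 b Hb_pos (m + S k)).
  assert (E : b (m + S k)%nat * ph k s = 0).
  { unfold Rdiv in H2. apply Rmult_integral in H2 as [H2 | H2]; [lra |].
    exfalso. revert H2. now apply Rinv_neq_0_compat. }
  apply Rmult_integral in E as [E | E]; lra.
Qed.

Lemma corecp_pos_increasing T :
  (a m + g + b (m + 1)%nat) / d <= T ->
  (forall j, (j < N)%nat -> a (m + S j)%nat + b (m + S j)%nat + b (m + S (S j))%nat <= T) ->
  forall j, (j <= N)%nat -> 0 < ph j T <= ph (S j) T.
Proof.
  intros HT0 HT. induction j as [|j IH]; intros Hj.
  - rewrite corecp_0, corecp_1. split; [lra |]. pose proof (Hb_pos (m + 1)%nat).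
    apply (Rmult_le_reg_r (b (m + 1)%nat)); [lra |]. unfold Rdiv. rewrite Rmult_assoc, Rinv_l by lra.
    apply (Rmult_le_compat_l d) in HT0; [| lra].
    replace (d * ((a m + g + b (m + 1)%nat) / d)) with (a m + g + b (m + 1)%nat) in HT0 by (field; lra). lra.
  - destruct (IH ltac:(lia)) as [H1 H2]. split; [lra |]. rewrite corecp_SS.
    pose proof (HT j ltac:(lia)). pose proof (Hb_pos (m + S j)%nat). pose proof (Hb_pos (m + S (S j))%nat).
    apply (Rmult_le_reg_r (b (m + S (S j))%nat)); [lra |]. unfold Rdiv. rewrite Rmult_assoc, Rinv_l by lra.
    assert (0 <= (T - a (m + S j)%nat - b (m + S j)%nat - b (m + S (S j))%nat) * ph (S j) T)
      by (apply Rmult_le_pos; lra).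
    nra.
Qed.

Lemma corecp_pos_far lam : exists T, lam < T /\ forall j, (j <= S N)%nat -> 0 < ph j T.
Proof.
  set (K := rsum (fun j => Rabs (a (m + S j)%nat) + b (m + S j)%nat + b (m + S (S j))%nat) N).
  set (c0 := (a m + g + b (m + 1)%nat) / d).
  assert (HK : forall j, (j < N)%nat -> a (m + S j)%nat + b (m + S j)%nat + b (m + S (S j))%nat <= K).
  { intros j Hj. pose proof (Rle_abs (a (m + S j)%nat)).
    assert (Rabs (a (m + S j)%nat) + b (m + S j)%nat + b (m + S (S j))%nat <= K); [| lra].
    apply (rsum_term_le (fun j => Rabs (a (m + S j)%nat) + b (m + S j)%nat + b (m + S (S j))%nat)); auto.
    intros i _. pose proof (Rabs_pos (a (m + S i)%nat)).
    pose proof (Hb_pos (m + S i)%nat). pose proof (Hb_pos (m + S (S i))%nat). lra. }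
  assert (HK0 : 0 <= K).
  { apply rsum_ge0. intros i _. pose proof (Rabs_pos (a (m + S i)%nat)).
    pose proof (Hb_pos (m + S i)%nat). pose proof (Hb_pos (m + S (S i))%nat). lra. }
  pose proof (Rle_abs lam). pose proof (Rle_abs c0). pose proof (Rabs_pos lam). pose proof (Rabs_pos c0).
  assert (HT0 : (a m + g + b (m + 1)%nat) / d <= Rabs lam + 1 + Rabs c0 + K) by (fold c0; lra).
  clearbody K c0. exists (Rabs lam + 1 + Rabs c0 + K).
  assert (HT : forall j, (j < N)%nat ->
    a (m + S j)%nat + b (m + S j)%nat + b (m + S (S j))%nat <= Rabs lam + 1 + Rabs c0 + K)
    by (intros j Hj; pose proof (HK j Hj); lra).
  pose proof (corecp_pos_increasing _ HT0 HT) as Hinc.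
  split; [lra |]. intros j Hj. destruct (Nat.eq_dec j (S N)) as [-> |].
  - destruct (Hinc N ltac:(lia)); lra.
  - now apply Hinc; lia.
Qed.

Fixpoint corecp_min (K : nat) (t : R) : R :=
  match K with O => ph 0 t | S K' => Rmin (corecp_min K' t) (ph (S K') t) end.

Lemma cont_corecp_min K : cont (corecp_min K).
Proof. induction K; simpl; [apply cont_corecp | apply cont_Rmin; auto using cont_corecp]. Qed.

Lemma corecp_min_le K t j : (j <= K)%nat -> corecp_min K t <= ph j t.
Proof.
  induction K as [|K IH]; intros Hj; simpl; [replace j with 0%nat by lia; lra |].
  destruct (Nat.eq_dec j (S K)) as [-> |]; [apply Rmin_r |].
  pose proof (IH ltac:(lia)). pose proof (Rmin_l (corecp_min K t) (ph (S K) t)). lra.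
Qed.

Lemma corecp_min_attained K t : exists j, (j <= K)%nat /\ corecp_min K t = ph j t.
Proof.
  induction K as [|K [j [Hj E]]]; simpl; [now exists 0%nat |].
  unfold Rmin. destruct Rle_dec; [exists j | exists (S K)]; split; auto.
Qed.

Lemma corecp_first_zero_last s k : (forall j, (j <= N)%nat -> 0 <= ph j s) ->
  (k <= N)%nat -> ph k s = 0 -> k = N /\ ph (S N) s < 0.
Proof.
  intros Hge Hk Hz. destruct k as [|i]; [rewrite corecp_0 in Hz; lra |].
  assert (Hi : 0 < ph i s).
  { destruct (Hge i ltac:(lia)) as [|E]; auto. exfalso. apply (corecp_no_common_zero i s); auto. }
  assert (Hneg : ph (S (S i)) s < 0).
  { rewrite corecp_SS, Hz. pose proof (Hb_pos (m + S i)%nat). pose proof (Hb_pos (m + S (S i))%nat).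
    replace (((s - a (m + S i)%nat) * 0 - b (m + S i)%nat * ph i s) / b (m + S (S i))%nat)
      with (- (b (m + S i)%nat * ph i s / b (m + S (S i))%nat)) by (field; lra).
    assert (0 < b (m + S i)%nat * ph i s / b (m + S (S i))%nat) by (apply Rdiv_lt_0_compat; nra). lra. }
  destruct (Nat.eq_dec (S i) N) as [<- | HN]; [auto |].
  pose proof (Hge (S (S i)) ltac:(lia)). lra.
Qed.

Variable lam : R.
Hypothesis Hlam : largest_zero_11 (corecp a b (S N) m g d) lam.
Hypothesis Hzeros_le1 : forall z, ph (S N) z = 0 -> z <= 1.

(* If some ph j (j <= N) were <= 0 at lam, the intermediate value theorem on their minimum gives a
   first common sign change s >= lam, after which ph (S N) has a zero beyond lam in [-1, 1]. *)
Lemma corecp_pos_at_largest_zero j : (j <= N)%nat -> 0 < ph j lam.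
Proof.
  destruct Hlam as [Hlam11 [Hlam0 Hlam_max]]. intros Hj.
  destruct (Rlt_or_le 0 (ph j lam)) as [| Hnpos]; auto. exfalso.
  destruct (corecp_pos_far lam) as [T [HT HTpos]].
  assert (Hmin_lam : corecp_min N lam <= 0) by (pose proof (corecp_min_le N lam j Hj); lra).
  assert (Hmin_T : 0 < corecp_min N T)
    by (destruct (corecp_min_attained N T) as [i [Hi ->]]; apply HTpos; lia).
  destruct (IVT_cor (corecp_min N) lam T (cont_continuity _ (cont_corecp_min N)) ltac:(lra) ltac:(nra))
    as [s [Hs Hmin_s]].
  destruct (corecp_min_attained N s) as [k [Hk Ek]].
  assert (Hge : forall i, (i <= N)%nat -> 0 <= ph i s)
    by (intros i Hi; pose proof (corecp_min_le N s i Hi); lra).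
  destruct (corecp_first_zero_last s k Hge Hk ltac:(lra)) as [_ Hneg].
  assert (Hs_lam : lam < s) by (destruct (Req_dec s lam) as [-> |]; lra).
  pose proof (HTpos (S N) (le_n _)).
  destruct (IVT_cor (corecp a b (S N) m g d) s T (cont_continuity _ (cont_corecp a b m g d (S N)))
              ltac:(lra) ltac:(nra)) as [z [Hz Ez]].
  pose proof (Hzeros_le1 z Ez). pose proof (Hlam_max z ltac:(lra) Ez). lra.
Qed.

End CorecursivePositivity.

Section MaximizersPiR.
Variable w : R -> R.
Variables a b : nat -> R.
Hypothesis Hw_nonneg : forall x, -1 <= x <= 1 -> 0 <= w x.
Hypothesis Hw_cont : cont_on_11 w.
Hypothesis Hb_pos : forall l, 0 < b l.
Hypothesis Horth : forall k l,
  RInt (fun x => opq a b k x * opq a b l x * w x) (-1) 1 = if Nat.eqb k l then 1 else 0.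
Variable m : nat.
Variable e : nat -> C.
Variable N : nat.

Let Rp := Rpoly a b m e.
Let d := wnorm2 w Rp.
Let g := eps w Rp - a m.
Notation PiR := (inPi_R a b Rp m (m + N)).
Notation ph j t := (corecp a b j m g d t).

Lemma wnorm2_Rpoly_pos : 0 < d.
Proof. pose proof (wnorm2_Rpoly_ge1 w a b Hw_nonneg Hw_cont Horth m e). unfold d, Rp. lra. Qed.

Section Coordinates.
Variable c : nat -> C.
Variable Pf : R -> C.
Hypothesis HPf : forall x,
  Pf x = Cplus (Cmult (c m) (Rp x)) (sum_n_m (fun l => cterm a b c l x) (m + 1) (m + N)).

Lemma wnorm2_PiR_coef : wnorm2 w Pf = coef_norm2 d (coef_re m c) N + coef_norm2 d (coef_im m c) N.
Proof. rewrite (wnorm2_PiR w a b Hw_cont Hb_pos Horth m e c N Pf HPf). unfold coef_norm2, d, Rp. ring. Qed.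

Lemma eps_PiR_coef : eps w Pf = coef_eps a b m g (coef_re m c) N + coef_eps a b m g (coef_im m c) N.
Proof. rewrite (eps_PiR w a b Hw_cont Hb_pos Horth m e c N Pf HPf). unfold coef_eps, g, Rp. ring. Qed.

End Coordinates.

(* The element of Pi^R with coordinates ph j z satisfies eps = z ||.||_w^2, and eps <= ||.||_w^2. *)
Lemma corecp_zeros_le1 z : ph (S N) z = 0 -> z <= 1.
Proof.
  intros Hz. set (c l := RtoC (ph (l - m)%nat z)).
  set (Pf x := Cplus (Cmult (c m) (Rp x)) (sum_n_m (fun l => cterm a b c l x) (m + 1) (m + N))).
  assert (Hre : forall j, (j <= N)%nat -> coef_re m c j = 1 * ph j z)
    by (intros j _; unfold coef_re, c; simpl; replace (m + j - m)%nat with j by lia; ring).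
  assert (Him : forall j, (j <= N)%nat -> coef_im m c j = 0 * ph j z)
    by (intros j _; unfold coef_im, c; simpl; ring).
  pose proof (wnorm2_PiR_coef c Pf (fun x => eq_refl)) as HN.
  pose proof (eps_PiR_coef c Pf (fun x => eq_refl)) as HE.
  pose proof (eps_le_wnorm2_PiR w a b Hw_nonneg Hw_cont m e c N Pf (fun x => eq_refl)).
  rewrite (coef_norm2_ext _ _ _ _ Hre), (coef_norm2_ext _ _ _ _ Him), !coef_norm2_scal in HN.
  rewrite (coef_eps_ext _ _ _ _ _ _ _ Hre), (coef_eps_ext _ _ _ _ _ _ _ Him) in HE.
  assert (Hform := coef_forms_corecp a b Hb_pos m g d z N). rewrite Hz in Hform.
  assert (Hform0 : coef_eps a b m g (fun j => 0 * ph j z) N = 0).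
  { unfold coef_eps, tail_eps. rewrite !rsum_eq0 by (intros; ring). ring. }
  assert (Hpos : 0 < coef_norm2 d (fun j => ph j z) N)
    by (apply coef_norm2_pos; [exact wnorm2_Rpoly_pos | rewrite corecp_0; lra]).
  rewrite (coef_eps_ext _ _ _ _ _ (fun j => ph j z)) in HE by (intros; ring).
  nra.
Qed.

Variable lam : R.
Hypothesis Hlam : largest_zero_11 (corecp a b (S N) m g d) lam.

Lemma corecp_pos_lam j : (j <= N)%nat -> 0 < ph j lam.
Proof. exact (corecp_pos_at_largest_zero a b Hb_pos m g d wnorm2_Rpoly_pos N lam Hlam corecp_zeros_le1 j). Qed.
Lemma corecp_zero_lam : ph (S N) lam = 0.
Proof. apply Hlam. Qed.

Lemma eps_le_lam_wnorm2 c Pf :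
  (forall x, Pf x = Cplus (Cmult (c m) (Rp x)) (sum_n_m (fun l => cterm a b c l x) (m + 1) (m + N))) ->
  eps w Pf <= lam * wnorm2 w Pf.
Proof.
  intros HPf. rewrite (eps_PiR_coef c Pf HPf), (wnorm2_PiR_coef c Pf HPf).
  pose proof (coef_eps_le a b Hb_pos m g d lam N corecp_pos_lam corecp_zero_lam (coef_re m c)).
  pose proof (coef_eps_le a b Hb_pos m g d lam N corecp_pos_lam corecp_zero_lam (coef_im m c)). lra.
Qed.

Definition extremal x :=
  Cplus (Rp x) (sum_n_m (fun l => RtoC (ph (l - m)%nat lam * opq a b l x)) (m + 1) (m + N)).

Let extremal_coef (kappa : C) l := Cmult kappa (RtoC (ph (l - m)%nat lam)).

Lemma extremal_scal_PiR kappa x : Cmult kappa (extremal x) =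
  Cplus (Cmult (extremal_coef kappa m) (Rp x))
        (sum_n_m (fun l => cterm a b (extremal_coef kappa) l x) (m + 1) (m + N)).
Proof.
  unfold extremal, extremal_coef. rewrite Cmult_plus_distr_l, Cmult_sum_n_m, Nat.sub_diag, corecp_0.
  f_equal; [apply C_eq; simpl; ring |].
  apply sum_n_m_ext. intros l. unfold cterm. apply C_eq; simpl; ring.
Qed.

Lemma eps_scal_extremal kappa :
  eps w (fun x => Cmult kappa (extremal x)) = lam * wnorm2 w (fun x => Cmult kappa (extremal x)).
Proof.
  pose proof (extremal_scal_PiR kappa) as HPf.
  assert (Hre : forall j, (j <= N)%nat -> coef_re m (extremal_coef kappa) j = fst kappa * ph j lam)
    by (intros; unfold coef_re, extremal_coef; replace (m + j - m)%nat with j by lia; simpl; ring).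
  assert (Him : forall j, (j <= N)%nat -> coef_im m (extremal_coef kappa) j = snd kappa * ph j lam)
    by (intros; unfold coef_im, extremal_coef; replace (m + j - m)%nat with j by lia; simpl; ring).
  rewrite (eps_PiR_coef _ _ HPf), (wnorm2_PiR_coef _ _ HPf).
  rewrite (coef_eps_eq_of_prop a b Hb_pos m g d lam N corecp_pos_lam corecp_zero_lam _ _ Hre).
  rewrite (coef_eps_eq_of_prop a b Hb_pos m g d lam N corecp_pos_lam corecp_zero_lam _ _ Him). ring.
Qed.

Lemma extremal_normalized : exists kappa, wnorm2 w (fun x => Cmult kappa (extremal x)) = 1.
Proof.
  set (q := coef_norm2 d (fun j => ph j lam) N).
  assert (Hq : 0 < q) by (apply coef_norm2_pos; [exact wnorm2_Rpoly_pos | rewrite corecp_0; lra]).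
  exists (RtoC (/ sqrt q)).
  rewrite (wnorm2_PiR_coef _ _ (extremal_scal_PiR _)).
  rewrite (coef_norm2_ext _ _ (fun j => / sqrt q * ph j lam)), (coef_norm2_ext _ (coef_im m _) (fun j => 0 * ph j lam))
    by (intros; unfold coef_re, coef_im, extremal_coef; replace (m + j - m)%nat with j by lia; simpl; ring).
  rewrite !coef_norm2_scal. fold q. pose proof (sqrt_lt_R0 q Hq). pose proof (sqrt_sqrt q ltac:(lra)).
  rewrite pow_inv, pow2_sqrt by lra. field. lra.
Qed.

Lemma max_eps_PiR : max_eps_is w (unit_sphere w PiR) lam.
Proof.
  split.
  - destruct extremal_normalized as [kappa Hk]. exists (fun x => Cmult kappa (extremal x)).
    split; [split; [exists (extremal_coef kappa); apply extremal_scal_PiR | exact Hk] |].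
    rewrite eps_scal_extremal, Hk. ring.
  - intros Pf [[c HPf] Hn]. pose proof (eps_le_lam_wnorm2 c Pf HPf). rewrite Hn in *. lra.
Qed.

Lemma maximizers_PiR Pf : is_maximizer w (unit_sphere w PiR) Pf <->
  exists kappa, (forall x, Pf x = Cmult kappa (extremal x)) /\ wnorm2 w Pf = 1.
Proof.
  split.
  - intros [[[c HPf] Hn] Hmax].
    assert (Hge : lam <= eps w Pf).
    { destruct max_eps_PiR as [[f [Hf Hfe]] _]. rewrite <- Hfe. now apply Hmax. }
    rewrite (eps_PiR_coef c Pf HPf) in Hge. pose proof (wnorm2_PiR_coef c Pf HPf) as Hn'. rewrite Hn in Hn'.
    pose proof (coef_eps_le a b Hb_pos m g d lam N corecp_pos_lam corecp_zero_lam (coef_re m c)).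
    pose proof (coef_eps_le a b Hb_pos m g d lam N corecp_pos_lam corecp_zero_lam (coef_im m c)).
    assert (Hre := coef_eps_eq_prop a b Hb_pos m g d lam N corecp_pos_lam corecp_zero_lam (coef_re m c) ltac:(nra)).
    assert (Him := coef_eps_eq_prop a b Hb_pos m g d lam N corecp_pos_lam corecp_zero_lam (coef_im m c) ltac:(nra)).
    exists (c m). split; [| exact Hn]. intros x. rewrite HPf.
    unfold extremal. rewrite Cmult_plus_distr_l, Cmult_sum_n_m. f_equal.
    apply sum_n_m_ext_loc. intros l Hl.
    specialize (Hre (l - m)%nat ltac:(lia)). specialize (Him (l - m)%nat ltac:(lia)).
    unfold coef_re, coef_im in Hre, Him. replace (m + (l - m))%nat with l in Hre, Him by lia.
    rewrite Nat.add_0_r in Hre, Him.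
    unfold cterm. apply C_eq; simpl; rewrite ?Hre, ?Him; ring.
  - intros [kappa [Hk Hn]].
    assert (Hscal : eps w Pf = lam * wnorm2 w Pf).
    { unfold eps, wnorm2.
      rewrite (RInt_ext_11 (fun x => x * cabs2 (Pf x) * w x)
                 (fun x => x * cabs2 (Cmult kappa (extremal x)) * w x)) by (intros; now rewrite Hk).
      rewrite (RInt_ext_11 (fun x => cabs2 (Pf x) * w x)
                 (fun x => cabs2 (Cmult kappa (extremal x)) * w x)) by (intros; now rewrite Hk).
      exact (eps_scal_extremal kappa). }
    split; [split; [exists (extremal_coef kappa); intros x; now rewrite Hk, extremal_scal_PiR | exact Hn] |].
    intros f Hf. rewrite Hscal, Hn, Rmult_1_r. now apply max_eps_PiR.
Qed.

End MaximizersPiR.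

Lemma largest_zero_11_iff q q' lam : (forall y, q y = 0 <-> q' y = 0) ->
  largest_zero_11 q lam -> largest_zero_11 q' lam.
Proof.
  intros H [H1 [H2 H3]]. split; [exact H1 | split; [now apply H |]].
  intros y Hy Hz. apply H3; [exact Hy | now apply H].
Qed.

Lemma maximizer_same_space w (S1 S2 : (R -> C) -> Prop) P : (forall f, S1 f <-> S2 f) ->
  is_maximizer w (unit_sphere w S1) P <-> is_maximizer w (unit_sphere w S2) P.
Proof.
  intros H. unfold is_maximizer, unit_sphere.
  split; intros [[HP Hn] Hmax]; (split; [split; [now apply H | exact Hn] |]);
    intros f [Hf Hfn]; apply Hmax; split; auto; now apply H.
Qed.

Lemma max_eps_same_space w (S1 S2 : (R -> C) -> Prop) M : (forall f, S1 f <-> S2 f) ->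
  max_eps_is w (unit_sphere w S1) M -> max_eps_is w (unit_sphere w S2) M.
Proof.
  intros H [[f [[Hf Hfn] Hfe]] Hub]. split.
  - exists f. split; [split; [now apply H | exact Hfn] | exact Hfe].
  - intros f' [Hf' Hf'n]. apply Hub. split; [now apply H | exact Hf'n].
Qed.

Section SpecialCases.
Variable w : R -> R.
Variables a b : nat -> R.
Hypothesis Hw_nonneg : forall x, -1 <= x <= 1 -> 0 <= w x.
Hypothesis Hw_cont : cont_on_11 w.
Hypothesis Hb_pos : forall l, 0 < b l.
Hypothesis Horth : forall k l,
  RInt (fun x => opq a b k x * opq a b l x * w x) (-1) 1 = if Nat.eqb k l then 1 else 0.

Let e0 : nat -> C := fun _ => RtoC 0.

Lemma Rpoly_zero m x : Rpoly a b m e0 x = RtoC (opq a b m x).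
Proof.
  unfold Rpoly. apply C_eq; simpl; [rewrite csum_lt_fst | rewrite csum_lt_snd];
    rewrite rsum_eq0 by (intros; unfold cterm, e0; simpl; ring); ring.
Qed.

Lemma wnorm2_Rpoly_zero m : wnorm2 w (Rpoly a b m e0) = 1.
Proof.
  unfold wnorm2. rewrite (RInt_ext_11 _ (fun x => opq a b m x * opq a b m x * w x)).
  - now rewrite Horth, Nat.eqb_refl.
  - intros x _. rewrite Rpoly_zero, cabs2_re_im. simpl. ring.
Qed.

Lemma eps_Rpoly_zero m : eps w (Rpoly a b m e0) = a m.
Proof.
  unfold eps. rewrite (RInt_ext_11 _ (fun x => x * opq a b m x * opq a b m x * w x)).
  - change (xinner w (opq a b m) (opq a b m) = a m).
    rewrite (xinner_opq w a b Hw_cont Hb_pos Horth), Nat.eqb_refl, !(proj2 (Nat.eqb_neq _ _)) by lia. ring.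
  - intros x _. rewrite Rpoly_zero, cabs2_re_im. simpl. ring.
Qed.

Lemma inPi_R_zero m n : (m <= n)%nat -> forall f, inPi_R a b (Rpoly a b m e0) m n f <-> inPi_m a b m n f.
Proof.
  intros Hmn f. split; intros [c Hc]; exists c; intros x; rewrite Hc, Rpoly_zero, (sum_Sn_m _ m n) by lia;
    now replace (S m) with (m + 1)%nat by lia.
Qed.

Lemma maximizers_Pim m n lam : (m <= n)%nat -> largest_zero_11 (assocp a b (n - m + 1) m) lam ->
  (forall P : R -> C,
      is_maximizer w (unit_sphere w (inPi_m a b m n)) P <->
      exists kappa : C,
        (forall x, P x = Cmult kappa
           (sum_n_m (fun l => RtoC (assocp a b (l - m) m lam * opq a b l x)) m n))
        /\ wnorm2 w P = 1)
   /\ max_eps_is w (unit_sphere w (inPi_m a b m n)) lam.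
Proof.
  intros Hmn Hlam. set (N := (n - m)%nat) in *.
  replace (N + 1)%nat with (S N) in Hlam by lia. replace n with (m + N)%nat in * by lia. clearbody N.
  assert (Hcorec : forall k y, corecp a b k m (eps w (Rpoly a b m e0) - a m) (wnorm2 w (Rpoly a b m e0)) y
                              = assocp a b k m y).
  { intros k y. rewrite eps_Rpoly_zero, wnorm2_Rpoly_zero, Rminus_diag. apply corecp_0_1. }
  assert (Hlam' : largest_zero_11 (corecp a b (S N) m (eps w (Rpoly a b m e0) - a m)
                                          (wnorm2 w (Rpoly a b m e0))) lam)
    by (apply (largest_zero_11_iff (assocp a b (S N) m)); [intros y; rewrite Hcorec; tauto | exact Hlam]).
  assert (Hextremal : forall x, extremal w a b m e0 N lam x
                                = sum_n_m (fun l => RtoC (assocp a b (l - m) m lam * opq a b l x)) m (m + N)).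
  { intros x. unfold extremal. rewrite (sum_Sn_m _ m (m + N)), Rpoly_zero, Nat.sub_diag by lia.
    replace (S m) with (m + 1)%nat by lia. change (assocp a b 0 m lam) with 1.
    rewrite (sum_n_m_ext _ (fun l => RtoC (assocp a b (l - m) m lam * opq a b l x)))
      by (intros; now rewrite Hcorec).
    apply C_eq; simpl; ring. }
  split.
  - intros P. rewrite <- (maximizer_same_space w _ _ P (inPi_R_zero m (m + N) ltac:(lia))).
    rewrite (maximizers_PiR w a b Hw_nonneg Hw_cont Hb_pos Horth m e0 N lam Hlam' P).
    split; intros [k [H1 H2]]; exists k; split; auto; intros x; rewrite H1, Hextremal; auto.
  - apply (max_eps_same_space w _ _ lam (inPi_R_zero m (m + N) ltac:(lia))).
    exact (max_eps_PiR w a b Hw_nonneg Hw_cont Hb_pos Horth m e0 N lam Hlam').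
Qed.

(* For m = 0 the associated polynomials are b_0 p_l. *)
Lemma maximizers_Pi n lam : largest_zero_11 (opq a b (n + 1)) lam ->
  (forall P : R -> C,
      is_maximizer w (unit_sphere w (inPi a b n)) P <->
      exists kappa : C,
        (forall x, P x = Cmult kappa
           (sum_n_m (fun l => RtoC (opq a b l lam * opq a b l x)) 0 n))
        /\ wnorm2 w P = 1)
   /\ max_eps_is w (unit_sphere w (inPi a b n)) lam.
Proof.
  intros Hlam. pose proof (b_neq0 b Hb_pos 0) as Hb0.
  assert (Hlam' : largest_zero_11 (assocp a b (n - 0 + 1) 0) lam).
  { rewrite Nat.sub_0_r. apply (largest_zero_11_iff (opq a b (n + 1))); [| exact Hlam].
    intros y. rewrite opq_assocp_0. split; intros Hz; [| rewrite Hz; unfold Rdiv; ring].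
    apply Rmult_integral in Hz as [Hz | Hz]; [exact Hz |]. exfalso. revert Hz. now apply Rinv_neq_0_compat. }
  destruct (maximizers_Pim 0 n lam (Nat.le_0_l n) Hlam') as [Hmax Hval].
  assert (Hsum : forall x, sum_n_m (fun l => RtoC (assocp a b (l - 0) 0 lam * opq a b l x)) 0 n =
     Cmult (RtoC (b 0%nat)) (sum_n_m (fun l => RtoC (opq a b l lam * opq a b l x)) 0 n)).
  { intros x. rewrite Cmult_sum_n_m. apply sum_n_m_ext. intros l.
    rewrite Nat.sub_0_r, (opq_assocp_0 a b lam l). apply C_eq; simpl; field; exact Hb0. }
  split; [| exact Hval].
  intros P. change (inPi a b n) with (inPi_m a b 0 n). rewrite Hmax. split.
  - intros [k [H1 H2]]. exists (Cmult k (RtoC (b 0%nat))). split; [| exact H2].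
    intros x. rewrite H1, Hsum. apply C_eq; simpl; ring.
  - intros [k [H1 H2]]. exists (Cmult k (RtoC (/ b 0%nat))). split; [| exact H2].
    intros x. rewrite H1, Hsum. apply C_eq; simpl; field; exact Hb0.
Qed.

End SpecialCases.

Theorem theorem2p8
  (w : R -> R) (a b : nat -> R) (m n : nat) (e : nat -> C)
  (lam1 lam2 lam3 : R)
  (Hw_nonneg : forall x, -1 <= x <= 1 -> 0 <= w x)
  (Hw_cont : cont_on_11 w)
  (Hb_pos : forall l, 0 < b l)
  (Horth : forall k l,
     RInt (fun x => opq a b k x * opq a b l x * w x) (-1) 1
     = if Nat.eqb k l then 1 else 0)
  (Hmn : (m <= n)%nat)
  (Hlam1 : largest_zero_11 (opq a b (n + 1)) lam1)
  (Hlam2 : largest_zero_11 (assocp a b (n - m + 1) m) lam2)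
  (Hlam3 : largest_zero_11
     (corecp a b (n - m + 1) m
        (eps w (Rpoly a b m e) - a m) (wnorm2 w (Rpoly a b m e))) lam3) :
  (* (1) *)
  ((forall P : R -> C,
      is_maximizer w (unit_sphere w (inPi a b n)) P <->
      exists kappa : C,
        (forall x, P x = Cmult kappa
           (sum_n_m (fun l => RtoC (opq a b l lam1 * opq a b l x)) 0 n))
        /\ wnorm2 w P = 1)
   /\ max_eps_is w (unit_sphere w (inPi a b n)) lam1)
  /\
  (* (2) *)
  ((forall P : R -> C,
      is_maximizer w (unit_sphere w (inPi_m a b m n)) P <->
      exists kappa : C,
        (forall x, P x = Cmult kappa
           (sum_n_m (fun l => RtoC (assocp a b (l - m) m lam2 * opq a b l x)) m n))
        /\ wnorm2 w P = 1)
   /\ max_eps_is w (unit_sphere w (inPi_m a b m n)) lam2)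
  /\
  (* (3) *)
  (let gR := eps w (Rpoly a b m e) - a m in
   let dR := wnorm2 w (Rpoly a b m e) in
   (forall P : R -> C,
      is_maximizer w (unit_sphere w (inPi_R a b (Rpoly a b m e) m n)) P <->
      exists kappa : C,
        (forall x, P x = Cmult kappa
           (Cplus (Rpoly a b m e x)
              (sum_n_m (fun l => RtoC (corecp a b (l - m) m gR dR lam3 * opq a b l x))
                 (m + 1) n)))
        /\ wnorm2 w P = 1)
   /\ max_eps_is w (unit_sphere w (inPi_R a b (Rpoly a b m e) m n)) lam3).
Proof.
  split; [now apply maximizers_Pi | split; [now apply maximizers_Pim |]].
  intros gR dR. set (N := (n - m)%nat) in *.
  replace (N + 1)%nat with (S N) in Hlam3 by lia. replace n with (m + N)%nat by lia.
  split.
  - exact (maximizers_PiR w a b Hw_nonneg Hw_cont Hb_pos Horth m e N lam3 Hlam3).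
  - exact (max_eps_PiR w a b Hw_nonneg Hw_cont Hb_pos Horth m e N lam3 Hlam3).
Qed.
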